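(* Let $U\subseteq\mathrm{Homeo}^+(\mathbb{R})$ and let $\mathcal{F}$ be a family such that: (1) $\mathcal{F}$ is a countable set of partial injective functions from $\mathbb{R}$ to $\mathbb{R}$; (2) for every $(x,y)\in\mathbb{R}^2$ there is $\varphi\in U$ with $\varphi(x)=y$ such that for every $z\neq x$ there is some $f\in\mathcal{F}$ (with $z\in\mathrm{dom}(f)$) satisfying $\varphi(z)=f(z)$. Let $\sim$ be the equivalence relation on $\mathbb{R}$ generated by $R:=\{(u,v): \exists f\in\mathcal{F}\ f(u)=v\}$. Then there is no good $U$-anonymous weak $\mathbb{R}/\sim$-predictor.
   Context: $\mathrm{Homeo}^+(\mathbb{R})$ is the group of increasing homeomorphisms of $\mathbb{R}$. For a set $S$, a weak $S$-predictor is a function $\mathcal{P}$ from the set of $S$-valued functions $f$ with domain $\mathbb{R}\setminus\{h_f\}$ for some $h_f\in\mathbb{R}$ into $S$. It is good if for every $F:\mathbb{R}\to S$ the set $\{x:\mathcal{P}(F|_{\mathbb{R}\setminus\{x\}})\neq F(x)\}$ has Lebesgue measure zero. It is $U$-anonymous if whenever $f,g$ are such functions with holes $h_f,h_g$, $\varphi\in U$, $\varphi(h_f)=h_g$, and $f=(g\circ\varphi)|_{\mathbb{R}\setminus\{h_f\}}$, then $\mathcal{P}(f)=\mathcal{P}(g)$. *)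

From HB Require Import structures.
From mathcomp Require Import all_boot all_order all_algebra.
From mathcomp Require Import all_classical all_reals all_analysis.
From Stdlib Require Import Relations.
Set Implicit Arguments. Unset Strict Implicit. Unset Printing Implicit Defensive.
Import Order.TTheory GRing.Theory Num.Theory numFieldNormedType.Exports.
Local Open Scope classical_set_scope.
Local Open Scope ring_scope.

(* Homeo^+(R): increasing homeomorphisms of R
   (continuous, strictly increasing bijections; the inverse is then
   automatically continuous, but we also require it explicitly). *)
Definition homeo_plus (R : realType) (phi : R -> R) : Prop :=
  continuous phi /\ (forall x y : R, x < y -> phi x < phi y) /\
  exists psi : R -> R, cancel phi psi /\ cancel psi phi /\ continuous psi.

(* Partial functions R -> R are encoded as R -> option R
   (dom f = [set x | f x <> None]); this encoding is exact (no junk). *)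
Definition partial_injective (R : realType) (f : R -> option R) : Prop :=
  forall u v w : R, f u = Some w -> f v = Some w -> u = v.

Definition relF (R : realType) (F : set (R -> option R)) : R -> R -> Prop :=
  fun u v => exists2 f, F f & f u = Some v.

Definition simF (R : realType) (F : set (R -> option R)) : R -> R -> Prop :=
  clos_refl_sym_trans R (relF F).

Definition quotF (R : realType) (F : set (R -> option R)) : Type :=
  {A : set R | exists x : R, A = [set y | simF F x y]}.

(* S-valued functions with domain R \ {h} for some h: pairs (h, f). *)
Definition holed (R : realType) (S : Type) : Type :=
  {h : R & {x : R | x <> h} -> S}.

Definition weak_predictor (R : realType) (S : Type) : Type := holed R S -> S.

Definition restrict (R : realType) (S : Type) (F : R -> S) (x : R) : holed R S :=
  existT (fun h => {z : R | z <> h} -> S) x (fun z => F (sval z)).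

Definition good_predictor (R : realType) (S : Type) (P : weak_predictor R S) :=
  forall F : R -> S,
    (@lebesgue_measure R).-negligible [set x | P (restrict F x) <> F x].

Definition anonymous (R : realType) (S : Type) (U : set (R -> R))
  (P : weak_predictor R S) : Prop :=
  forall (hf hg : R) (f : {x : R | x <> hf} -> S) (g : {x : R | x <> hg} -> S)
         (phi : R -> R),
    U phi -> phi hf = hg ->
    (forall (z : R) (hz : z <> hf) (hz' : phi z <> hg),
        f (exist _ z hz) = g (exist _ (phi z) hz')) ->
    P (existT _ hf f) = P (existT _ hg g).

From Pilot Require Import Defs.
From HB Require Import structures.
From mathcomp Require Import all_boot all_order all_algebra.
From mathcomp Require Import all_classical all_reals all_analysis.
From Stdlib Require Import Relations.
Set Implicit Arguments. Unset Strict Implicit. Unset Printing Implicit Defensive.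
Import Order.TTheory GRing.Theory Num.Theory numFieldNormedType.Exports.
Local Open Scope classical_set_scope.
Local Open Scope ring_scope.

(* Every ~-class is countable, since it is reached from one point by finite
   paths along the countably many partial injections of F and their inverses;
   hence it is Lebesgue-null.  By transitivity of U and anonymity, a predictor
   cannot tell apart the restrictions of the class map x |-> [x] at different
   points, so it predicts one fixed class everywhere and errs on the
   complement of a null set, which is not null. *)

Section EquivalenceClasses.
Variables (R : realType) (F : set (R -> option R)).
Hypothesis F_countable : countable F.
Hypothesis F_inj : forall f, F f -> partial_injective f.

Definition adjacent (u : R) : set R := [set v | relF F u v \/ relF F v u].

Lemma adjacent_countable u : countable (adjacent u).
Proof.
have sub : adjacent u `<=` \bigcup_(f in F) [set v | f u = Some v \/ f v = Some u].
  by move=> v [[f Ff fuv]|[f Ff fvu]]; exists f => //; [left|right].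
apply: sub_countable (subset_card_le sub) _.
apply: bigcup_countable => // f Ff; apply/countable_injP.
exists (fun v => if f u == Some v then 0%N else 1%N) => v w.
rewrite !inE /= => -[fuv|fvu] [fuw|fwu].
- by move: fuw; rewrite fuv => -[].
- by rewrite fuv eqxx; case: eqP => // -[].
- by rewrite fuw eqxx; case: eqP => // -[].
- by move=> _; exact: F_inj Ff v w u fvu fwu.
Qed.

Fixpoint reach (n : nat) (x : R) : set R :=
  if n is m.+1 then \bigcup_(u in reach m x) adjacent u else [set x].

Definition orbit (x : R) : set R := \bigcup_(n in [set: nat]) reach n x.

Lemma reach_countable n x : countable (reach n x).
Proof.
elim: n => [|n IH] /=; first exact: countable1.
exact: bigcup_countable IH (fun u _ => adjacent_countable u).
Qed.

Lemma orbit_countable x : countable (orbit x).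
Proof. exact: bigcup_countable (fun n _ => reach_countable n x). Qed.

Lemma simF_sub_orbit x : [set y | simF F x y] `<=` orbit x.
Proof.
move=> y xy; elim: (clos_rst_rstn1 _ _ _ _ xy) => [|u v uv _ [n _ xu]]; first by exists 0%N.
by exists n.+1 => //; exists u.
Qed.

Lemma simF_class_countable x : countable [set y | simF F x y].
Proof. exact: sub_countable (subset_card_le (@simF_sub_orbit x)) (orbit_countable x). Qed.

End EquivalenceClasses.

Section ClassMap.
Variables (R : realType) (F : set (R -> option R)).

Definition class_of (x : R) : quotF F :=
  exist _ [set y | simF F x y] (ex_intro _ x erefl).

Let simF_equiv := @clos_rst_is_equiv R (relF F).

Lemma class_of_eqP x y : class_of x = class_of y <-> simF F x y.
Proof.
split=> [/(congr1 sval) /= classes_eq | xy].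
  have : [set z | simF F y z] y by exact: (equiv_refl _ _ simF_equiv).
  by rewrite -classes_eq.
apply: eq_exist; apply/funext => z; apply/propext; split => /=.
- exact: (equiv_trans _ _ simF_equiv) (equiv_sym _ _ simF_equiv _ _ xy).
- exact: (equiv_trans _ _ simF_equiv) xy.
Qed.

Lemma class_of_surj (c : quotF F) : exists x, c = class_of x.
Proof.
case: c => A [x defA]; exists x; exact: eq_exist.
Qed.

Lemma anonymous_restrict_class_of (U : set (R -> R)) (P : weak_predictor R (quotF F)) :
  (forall x y : R, exists phi, [/\ U phi, phi x = y &
      forall z, z <> x -> exists2 f, F f & f z = Some (phi z)]) ->
  anonymous U P ->
  forall x y, P (Defs.restrict class_of x) = P (Defs.restrict class_of y).
Proof.
move=> U_trans P_anon x y; have [phi [Uphi phixy phiF]] := U_trans x y.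
apply: (P_anon _ _ _ _ phi Uphi phixy) => z zx _ /=.
apply/class_of_eqP/rst_step; have [f Ff fz] := phiF z zx; by exists f.
Qed.

End ClassMap.

Section LebesgueNull.
Variable R : realType.

Lemma countable_negligible (A : set R) :
  countable A -> (@lebesgue_measure R).-negligible A.
Proof.
move=> cA; apply/negligibleP; first exact: countable_measurable.
exact: countable_lebesgue_measure0.
Qed.

Lemma cover_not_negligible (A : set R) :
  [set: R] `<=` A -> ~ (@lebesgue_measure R).-negligible A.
Proof.
move=> coverA nullA.
have : (@lebesgue_measure R) [set` `[0%R, 1%R]] = 0%E.
  apply: measure_negligible; first exact: measurable_itv.
  by apply: negligibleS nullA => x _; exact: coverA.
rewrite lebesgue_measure_itv /= lte_fin ltr01 oppr0 adde0.
by move=> /eqP; rewrite eqe oner_eq0.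
Qed.

End LebesgueNull.

Theorem corollary5p3 (R : realType) (U : set (R -> R)) (F : set (R -> option R)) :
  (forall phi, U phi -> homeo_plus phi) ->
  countable F ->
  (forall f, F f -> partial_injective f) ->
  (forall x y : R, exists phi, [/\ U phi, phi x = y &
      forall z, z <> x -> exists2 f, F f & f z = Some (phi z)]) ->
  ~ exists P : weak_predictor R (quotF F), good_predictor P /\ anonymous U P.
Proof.
move=> _ F_countable F_inj U_trans [P [P_good P_anon]].
have [x0 P0] := class_of_surj (P (Defs.restrict (class_of F) 0)).
have wrong_off_class : [set: R] `<=`
    [set x | P (Defs.restrict (class_of F) x) <> class_of F x] `|` [set y | simF F x0 y].
  move=> y _; have [|not_x0y] := pselect (simF F x0 y); [by right | left => /= P_right].
  apply/not_x0y/class_of_eqP; rewrite -P0 -P_right.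
  exact: (anonymous_restrict_class_of U_trans P_anon).
apply: cover_not_negligible wrong_off_class _.
exact: negligibleU (P_good _) (countable_negligible (simF_class_countable F_countable F_inj x0)).
Qed.
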